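(* Let $i,j,k$ be three distinct agents with nominal states $\tilde g_i,\tilde g_j,\tilde g_k\in\mathbb R^3$, let $\theta\in\mathbb R$, and let $g_i,g_j,g_k\in\mathbb R^3$ satisfy $$W_{jk}(g_i-g_k)+W_{ki}(g_j-g_k)=0.$$ Then for every $s,\tau\in\mathbb R^3$, with $S=\Theta\,\mathrm{diag}(s)\,\Theta^\top$ and $g'_r=Sg_r+\tau$ for $r\in\{i,j,k\}$, one also has $W_{jk}(g'_i-g'_k)+W_{ki}(g'_j-g'_k)=0$.
   Context: $R(\theta)$ is the $2\times2$ rotation matrix by $\theta$, $\Theta=\mathrm{diag}(R(\theta),1)\in\mathbb R^{3\times3}$. Write $\tilde g_r=[\tilde p_r^\top,\tilde\phi_r]^\top$ and $\Theta^\top\tilde g_r=[\tilde p^x_{r,\theta},\tilde p^y_{r,\theta},\tilde\phi_r]^\top$; for $u,v\in\{i,j,k\}$, $\tilde p^x_{uv,\theta}=\tilde p^x_{u,\theta}-\tilde p^x_{v,\theta}$, similarly $\tilde p^y_{uv,\theta}$, $\tilde\phi_{uv}=\tilde\phi_u-\tilde\phi_v$, $w_{uv}=\mathrm{diag}(\tilde p^x_{uv,\theta},\tilde p^y_{uv,\theta},\tilde\phi_{uv})$, and $W_{uv}=w_{uv}\Theta^\top$. *)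

From HB Require Import structures.
From mathcomp Require Import all_boot all_order all_algebra.
From mathcomp Require Import all_classical all_reals all_analysis.
Set Implicit Arguments. Unset Strict Implicit. Unset Printing Implicit Defensive.
Import Order.TTheory GRing.Theory Num.Theory.
Local Open Scope ring_scope.

Definition Theta {R : realType} (theta : R) : 'M[R]_3 :=
  \matrix_(a < 3, b < 3)
    match nat_of_ord a, nat_of_ord b with
    | 0, 0 => cos theta
    | 0, 1 => - sin theta
    | 1, 0 => sin theta
    | 1, 1 => cos theta
    | 2, 2 => 1
    | _, _ => 0
    end.

(* w_uv = diag(Theta^T (gt_u - gt_v)) ; componentwise differences of the
   rotated nominal states equal the components of Theta^T (gt_u - gt_v) *)
Definition w_mat {R : realType} (theta : R) (gu gv : 'cV[R]_3) : 'M[R]_3 :=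
  diag_mx ((Theta theta)^T *m gu - (Theta theta)^T *m gv)^T.

Definition W_mat {R : realType} (theta : R) (gu gv : 'cV[R]_3) : 'M[R]_3 :=
  w_mat theta gu gv *m (Theta theta)^T.

Definition S_mat {R : realType} (theta : R) (s : 'cV[R]_3) : 'M[R]_3 :=
  Theta theta *m diag_mx s^T *m (Theta theta)^T.

From HB Require Import structures.
From mathcomp Require Import all_boot all_order all_algebra.
From mathcomp Require Import all_classical all_reals all_analysis.
From mathcomp Require Import ring.
Import Order.TTheory GRing.Theory Num.Theory.
Local Open Scope ring_scope.

(* Since Theta is orthogonal and w_uv is diagonal,
   W_uv S = w_uv diag(s) Theta^T = diag(s) w_uv Theta^T = diag(s) W_uv.
   Hence the constraint evaluated at the transformed states is diag(s) times
   the original one, the translation tau cancelling in the differences. *)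

Lemma trmx_Theta_mul_Theta (R : realType) (theta : R) :
  (Theta theta)^T *m Theta theta = 1%:M.
Proof.
have cos2Dsin2_theta := cos2Dsin2 theta.
apply/matrixP => a b; rewrite !mxE !big_ord_recr big_ord0 /= !mxE.
case: a => [[|[|[|a]]] Ha] //; case: b => [[|[|[|b]]] Hb] //=;
  rewrite ?mulr0 ?mul0r ?add0r ?addr0 ?mulr1 //; try ring.
all: by rewrite -cos2Dsin2_theta; ring.
Qed.

Lemma W_mat_mul_S_mat (R : realType) (theta : R) (gu gv s : 'cV[R]_3) :
  W_mat theta gu gv *m S_mat theta s = diag_mx s^T *m W_mat theta gu gv.
Proof.
rewrite /W_mat /S_mat /w_mat !mulmxA -(mulmxA _ (Theta theta)^T).
by rewrite trmx_Theta_mul_Theta mulmx1 diag_mxC.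
Qed.

Lemma affine_mxB (R : pzRingType) (m n : nat) (A : 'M[R]_(m, n))
    (tau : 'cV[R]_m) (x y : 'cV[R]_n) :
  (A *m x + tau) - (A *m y + tau) = A *m (x - y).
Proof. by rewrite mulmxBr opprD addrACA subrr addr0. Qed.

Theorem lemma5 (R : realType) (Agent : Type) (gt : Agent -> 'cV[R]_3)
  (i j k : Agent) (hij : i <> j) (hjk : j <> k) (hik : i <> k)
  (theta : R) (gi gj gk : 'cV[R]_3) :
  W_mat theta (gt j) (gt k) *m (gi - gk) + W_mat theta (gt k) (gt i) *m (gj - gk) = 0 ->
  forall s tau : 'cV[R]_3,
    let gi' := S_mat theta s *m gi + tau in
    let gj' := S_mat theta s *m gj + tau in
    let gk' := S_mat theta s *m gk + tau in
    W_mat theta (gt j) (gt k) *m (gi' - gk') + W_mat theta (gt k) (gt i) *m (gj' - gk') = 0.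
Proof.
move=> constraint s tau gi' gj' gk'.
rewrite /gi' /gj' /gk' !affine_mxB.
rewrite (mulmxA (W_mat _ _ _)) W_mat_mul_S_mat (mulmxA (W_mat _ _ _)) W_mat_mul_S_mat.
by rewrite -!(mulmxA (diag_mx s^T)) -(mulmxDr (diag_mx s^T)) constraint mulmx0.
Qed.
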